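(* Let $G=(V,E)$ be a simple, unoriented, locally finite graph with graph distance $d$, and let $x,x'$ be adjacent vertices with degrees $d_x=\delta$ and $d_{x'}=\delta'$. Let $N$ be a positive integer and $t=1/N$. Then there exists an optimal coupling $\xi^t$ between $\mu^t_x$ and $\mu^t_{x'}$ (i.e. one attaining $W_1(\mu^t_x,\mu^t_{x'})$) all of whose coefficients lie in $\frac{1}{N\delta\delta'}\mathbb{N}$. Consequently $\kappa^1(x,x')$ and $\operatorname{ric}(x,x')$ lie in $\frac{1}{\delta\delta'}\mathbb{Z}$.
   Context: For a vertex $x$, $S_x$ is the set of neighbours of $x$ and $d_x=|S_x|$; $d$ is the graph distance. The lazy random walk $\mu^t_x$ is the probability measure with $\mu^t_x(x)=1-t$, $\mu^t_x(y)=t/d_x$ for $y\in S_x$, and $0$ elsewhere. A coupling between probability measures $\mu,\mu'$ on $V$ is a nonnegative function $\xi$ on $V\times V$ with $\sum_{y'}\xi(y,y')=\mu(y)$ and $\sum_y\xi(y,y')=\mu'(y')$. $W_1(\mu,\mu')=\inf_\xi\sum_{y,y'}\xi(y,y')d(y,y')$ over all couplings. $\kappa^t(x,x')=1-W_1(\mu^t_x,\mu^t_{x'})/d(x,x')$ (so $\kappa^1$ uses the uniform measures on the neighbourhoods), and $\operatorname{ric}(x,x')=\liminf_{t\to0^+}\kappa^t(x,x')/t$. *)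

From HB Require Import structures.
From mathcomp Require Import all_boot all_order all_algebra.
From mathcomp Require Import all_classical all_reals all_analysis.
Set Implicit Arguments. Unset Strict Implicit. Unset Printing Implicit Defensive.
Import Order.TTheory GRing.Theory Num.Theory.
Import numFieldNormedType.Exports.
Local Open Scope classical_set_scope.
Local Open Scope ring_scope.

(* A locally finite graph on a vertex type V is given by its (finite) lists
   of neighbours nb : V -> seq V; simplicity/undirectedness are hypotheses
   of the theorem (uniq, irreflexive, symmetric). *)

Section Graph.
Variables (V : choiceType) (nb : V -> seq V).

Fixpoint walk (n : nat) (y z : V) : Prop :=
  match n with
  | 0 => y = z
  | n.+1 => exists w, w \in nb y /\ walk n w z
  end.

Definition gdist (R : realType) (y z : V) : \bar R :=
  match pselect (exists n, `[< walk n y z >]) with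
  | left h => ((ex_minn h)%:R)%:E
  | right _ => +oo%E
  end.

Definition lazy_rw (R : realType) (t : R) (x : V) : V -> R :=
  fun y => if y == x then 1 - t
           else if y \in nb x then t / (size (nb x))%:R else 0.

Definition is_coupling (R : realType) (m m' : V -> R) (xi : V -> V -> R) : Prop :=
  (forall y y', 0 <= xi y y') /\
  (forall y, (\esum_(y' in [set: V]) (xi y y')%:E = (m y)%:E)%E) /\
  (forall y', (\esum_(y in [set: V]) (xi y y')%:E = (m' y')%:E)%E).

Definition coupling_cost (R : realType) (xi : V -> V -> R) : \bar R :=
  (\esum_(p in [set: V * V]) ((xi p.1 p.2)%:E * gdist R p.1 p.2))%E.

Definition W1 (R : realType) (m m' : V -> R) : \bar R :=
  ereal_inf [set coupling_cost xi | xi in [set xi | is_coupling m m' xi]].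

Definition kappa (R : realType) (t : R) (x x' : V) : R :=
  1 - fine (W1 (lazy_rw t x) (lazy_rw t x')) / fine (gdist R x x').

Definition ric (R : realType) (x x' : V) : \bar R :=
  limf_einf (fun t : R => (kappa t x x' / t)%:E) (0%R)^'+.

End Graph.

From HB Require Import structures.
From mathcomp Require Import all_boot all_order all_algebra.
From mathcomp Require Import all_classical all_reals all_analysis.
From mathcomp Require Import zify ring lra.
Set Implicit Arguments. Unset Strict Implicit. Unset Printing Implicit Defensive.
Import Order.TTheory GRing.Theory Num.Theory.
Import numFieldNormedType.Exports.
Local Open Scope ring_scope.

(* Couplings of mu^t_x and mu^t_x' live on the product of the two closed
   neighbourhoods, so W1 is the value of a finite transportation problem whose
   costs are graph distances, hence integers.  For t = 1/N the marginals become
   integral once multiplied by M = N delta delta'.  A transportation plan with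
   integral marginals and some fractional entry admits a nonzero circulation
   supported on its fractional entries (each row and column meeting them meets
   them twice, so they are at least as many as those rows and columns); moving
   along it in the cost-decreasing direction makes one more entry integral.
   Hence some optimal plan has entries in (1/M)N, W1 lies in (1/M)N, and
   kappa^t / t lies in (1/(delta delta'))Z at t = 1/N.  Mixing a plan with the
   coupling that keeps all mass at (x, x') shows that kappa^t / t is
   nonincreasing in t; being bounded by 2 and quantized along t = 1/N, it is
   constant for small t, and ric equals that constant. *)

Lemma left_kernel_nonzero (F : fieldType) m n (A : 'M[F]_(m, n)) (w : 'cV_n) :
  w != 0 -> A *m w = 0 -> (n <= m)%N -> exists2 u : 'rV_m, u != 0 & u *m A = 0.
Proof.
move=> w_neq0 Aw0 le_nm.
have /mxrankS : (w^T <= kermx A^T)%MS.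
  by apply/sub_kermxP; rewrite -trmx_mul Aw0 trmx0.
rewrite rank_rV trmx_eq0 w_neq0 mxrank_ker mxrank_tr => rankA.
have : kermx A != 0.
  rewrite kermx_eq0 /row_free; apply: contraL rankA => /eqP->.
  by rewrite subn_gt0 -leqNgt.
case/matrix0Pn=> i [j kerA_ij]; exists (row i (kermx A)).
  by apply/rV0Pn; exists j; rewrite mxE.
by rewrite -row_mul mulmx_ker row0.
Qed.

Lemma double_card_imset (T T' : finType) (f : T -> T') (A : {set T}) :
  {in A, forall p, exists2 q, q \in A & (q != p) && (f q == f p)} ->
  (2 * #|f @: A| <= #|A|)%N.
Proof.
move=> partner; rewrite -[X in (_ <= X)%N]sum1_card (partition_big_imset f) /=.
rewrite mulnC -sum_nat_const.
apply: leq_sum => _ /imsetP[p pA ->].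
have [q qA /andP[qp fqp]] := partner p pA.
by rewrite (bigD1 p) ?pA ?eqxx //= (bigD1 q) /= ?qA ?fqp ?qp.
Qed.

Section Circulation.
Variables (R : fieldType) (I J : finType).

Definition circulation (D : I -> J -> R) :=
  (forall i, \sum_j D i j = 0) /\ (forall j, \sum_i D i j = 0).

Lemma circulationZ a D : circulation D -> circulation (fun i j => a * D i j).
Proof.
by case=> Dr Dc; split=> [i|j]; rewrite -mulr_sumr ?Dr ?Dc mulr0.
Qed.

Variable F : {set I * J}.

Definition fibre_mx (T : finType) (S : {set T}) (f : I * J -> T) : 'M[R]_(#|F|, #|S|) :=
  \matrix_(k, s) (f (enum_val k) == enum_val s)%:R.

Lemma fibre_mx_const1 (T : finType) (S : {set T}) (f : I * J -> T) :
  {in F, forall p, f p \in S} ->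
  fibre_mx S f *m (const_mx 1 : 'cV_#|S|) = const_mx 1.
Proof.
move=> fS; apply/matrixP => k z; rewrite !mxE.
under eq_bigr do rewrite !mxE mulr1.
rewrite -(big_enum_val (fun y => (f (enum_val k) == y)%:R)) /=.
rewrite (bigD1 (f (enum_val k))) ?fS ?enum_valP //= eqxx big1 ?addr0 //.
by move=> y /andP[_ /negbTE]; rewrite eq_sym => ->.
Qed.

Definition rV_fun (u : 'rV[R]_#|F|) (i : I) (j : J) : R :=
  \sum_(k | enum_val k == (i, j)) u 0 k.

Lemma rV_funE (u : 'rV[R]_#|F|) k : rV_fun u (enum_val k).1 (enum_val k).2 = u 0 k.
Proof.
rewrite /rV_fun -surjective_pairing (bigD1 k) //= big1 ?addr0 //.
by move=> k' /andP[/eqP/enum_val_inj-> /negbTE]; rewrite eqxx.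
Qed.

Lemma rV_fun_supp (u : 'rV[R]_#|F|) i j : rV_fun u i j != 0 -> (i, j) \in F.
Proof.
apply: contraNT => ijF; apply/eqP/big1 => k /eqP ek.
by move: ijF; rewrite -ek enum_valP.
Qed.

Lemma rV_fun_sum (u : 'rV[R]_#|F|) (h : I * J -> R) :
  \sum_k u 0 k * h (enum_val k) = \sum_i \sum_j rV_fun u i j * h (i, j).
Proof.
rewrite pair_bigA /= (partition_big enum_val predT) //=.
apply: eq_bigr => p _; rewrite /rV_fun -surjective_pairing mulr_suml.
by apply: eq_bigr => k /eqP->.
Qed.

(* The vector (1, -1) lies in the kernel of the row/column incidence matrix of F,
   whose rows are thus dependent; a dependency is a circulation supported on F. *)
Lemma circulation_on : (0 < #|F|)%N -> (#|fst @: F| + #|snd @: F| <= #|F|)%N ->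
  exists D, [/\ circulation D, exists i j, D i j != 0
              & forall i j, D i j != 0 -> (i, j) \in F].
Proof.
case/card_gt0P=> p0 p0F card_F.
set RF := fst @: F; set CF := snd @: F.
have RFP p : p \in F -> p.1 \in RF by move=> pF; apply: imset_f.
have CFP p : p \in F -> p.2 \in CF by move=> pF; apply: imset_f.
pose w : 'cV[R]_(#|RF| + #|CF|) := col_mx (const_mx 1) (- const_mx 1).
have w_neq0 : w != 0.
  rewrite col_mx_eq0 negb_and; apply/orP; left; apply/cV0Pn.
  by exists (enum_rank_in (RFP _ p0F) p0.1); rewrite mxE oner_eq0.
have Aw0 : row_mx (fibre_mx RF fst) (fibre_mx CF snd) *m w = 0.
  by rewrite mul_row_col mulmxN !fibre_mx_const1 ?subrr.
have [u u_neq0] := left_kernel_nonzero w_neq0 Aw0 card_F.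
rewrite mul_mx_row => /eqP; rewrite row_mx_eq0 => /andP[/eqP uA1 /eqP uA2].
exists (rV_fun u); split; last exact: rV_fun_supp.
- split=> [i|j].
    have [iRF|iRF] := boolP (i \in RF); last first.
      by apply: big1 => j _; apply: contraNeq iRF => /rV_fun_supp/RFP.
    have := congr1 (fun v : 'rV_#|RF| => v 0 (enum_rank_in iRF i)) uA1.
    rewrite !mxE; under eq_bigr do rewrite mxE enum_rankK_in //.
    rewrite (rV_fun_sum u (fun p => (p.1 == i)%:R)) /= => h; rewrite -[RHS]h.
    rewrite (bigD1 i) //= [X in _ + X]big1 ?addr0; last first.
      by move=> i' /negbTE i'i; apply: big1 => j _; rewrite i'i mulr0.
    by apply: eq_bigr => j _; rewrite eqxx mulr1.
  have [jCF|jCF] := boolP (j \in CF); last first.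
    by apply: big1 => i _; apply: contraNeq jCF => /rV_fun_supp/CFP.
  have := congr1 (fun v : 'rV_#|CF| => v 0 (enum_rank_in jCF j)) uA2.
  rewrite !mxE; under eq_bigr do rewrite mxE enum_rankK_in //.
  rewrite (rV_fun_sum u (fun p => (p.2 == j)%:R)) /= => h; rewrite -[RHS]h.
  apply: eq_bigr => i _; rewrite (bigD1 j) //= eqxx mulr1 big1 ?addr0 //.
  by move=> j' /negbTE->; rewrite mulr0.
- have [k uk] := rV0Pn _ u_neq0.
  by exists (enum_val k).1, (enum_val k).2; rewrite rV_funE.
Qed.

End Circulation.

Section Fractional.
Variable R : archiRealFieldType.

Lemma frac_partner (J : finType) (f : J -> R) j :
  \sum_j f j \is a Num.int -> f j \notin Num.int ->
  exists2 j', j' != j & f j' \notin Num.int.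
Proof.
move=> sum_int fj_frac; apply/exists_inP; apply: contraNT fj_frac.
rewrite negb_exists_in => /forall_inP others_int.
have -> : f j = \sum_j f j - \sum_(j' | j' != j) f j' by rewrite (bigD1 j) //= addrK.
by rewrite rpredB //; apply: rpred_sum => j' /others_int /negPn.
Qed.

(* For fractional [x], [x + frac_gap x d * d] is the first integer reached from
   [x] in the direction [d]; the gap is 0 when [d = 0]. *)
Definition frac_gap (x d : R) : R :=
  if 0 < d then ((Num.floor x)%:~R + 1 - x) / d
  else (x - (Num.floor x)%:~R) / - d.

Lemma frac_gap_int x d : d != 0 -> x + frac_gap x d * d \is a Num.int.
Proof.
move=> d_neq0; rewrite /frac_gap; case: ifP => _.
  by rewrite divfK // addrC subrK rpredD ?intr_int ?rpred1.
by rewrite invrN mulrN mulNr divfK // opprB addrC subrK intr_int.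
Qed.

Lemma frac_gap_shift_ge0 x d s :
  0 <= x -> 0 <= s <= frac_gap x d -> 0 <= x + s * d.
Proof.
move=> x_ge0 /andP[s_ge0 s_le]; have [floor_le _] := andP (floor_itv x).
have floor_ge0 : 0 <= (Num.floor x)%:~R :> R by rewrite ler0z floor_ge0.
case: (ltrgtP d 0) => [d_lt0|d_gt0|->]; last by rewrite mulr0 addr0.
  have : frac_gap x d * d <= s * d by rewrite ler_wnM2r // ltW.
  rewrite /frac_gap ltNge (ltW d_lt0) /= invrN mulrN mulNr divfK ?lt_eqF //.
  lra.
by rewrite addr_ge0 // mulr_ge0 // ltW.
Qed.

Lemma frac_gap_ge0 x d : 0 <= frac_gap x d.
Proof.
have /andP[floor_le lt_floor] := floor_itv x; rewrite intrD in lt_floor.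
rewrite /frac_gap; case: ltrP => d_sign.
  by rewrite divr_ge0 ?subr_ge0 ?ltW.
by rewrite divr_ge0 ?subr_ge0 ?oppr_ge0.
Qed.

End Fractional.

Section TransportPlans.
Variables (R : archiRealFieldType) (I J : finType).
Implicit Types (C X Y D : I -> J -> R) (r : I -> R) (s : J -> R).

Definition cost C X := \sum_i \sum_j X i j * C i j.

Lemma costD C X Y : cost C (fun i j => X i j + Y i j) = cost C X + cost C Y.
Proof.
rewrite /cost -big_split; apply: eq_bigr => i _.
by rewrite -big_split; apply: eq_bigr => j _; rewrite mulrDl.
Qed.

Lemma costZ C a X : cost C (fun i j => a * X i j) = a * cost C X.
Proof.
rewrite /cost mulr_sumr; apply: eq_bigr => i _.
by rewrite mulr_sumr; apply: eq_bigr => j _; rewrite mulrA.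
Qed.

Lemma cost_ge0 C X : (forall i j, 0 <= C i j) -> (forall i j, 0 <= X i j) ->
  0 <= cost C X.
Proof.
by move=> C_ge0 X_ge0; apply: sumr_ge0 => i _; apply: sumr_ge0 => j _; rewrite mulr_ge0.
Qed.

Lemma cost_delta C i0 j0 : cost C (fun i j => ((i == i0) && (j == j0))%:R) = C i0 j0.
Proof.
rewrite /cost (bigD1 i0) //= (bigD1 j0) //= !eqxx mul1r !big1 ?addr0 //
  => [i /negbTE->|j /negbTE->].
  by apply: big1 => j _; rewrite mul0r.
by rewrite andbF mul0r.
Qed.

Definition transport_plan r s X := [/\ forall i j, 0 <= X i j,
  forall i, \sum_j X i j = r i & forall j, \sum_i X i j = s j].

Lemma transport_planD r s r' s' X Y :
  transport_plan r s X -> transport_plan r' s' Y ->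
  transport_plan (fun i => r i + r' i) (fun j => s j + s' j) (fun i j => X i j + Y i j).
Proof.
case=> X_ge0 Xr Xs [Y_ge0 Yr Ys].
by split=> [i j|i|j]; rewrite ?addr_ge0 // big_split /= ?Xr ?Yr ?Xs ?Ys.
Qed.

Lemma transport_planZ a r s X : 0 <= a -> transport_plan r s X ->
  transport_plan (fun i => a * r i) (fun j => a * s j) (fun i j => a * X i j).
Proof.
move=> a_ge0 [X_ge0 Xr Xs].
by split=> [i j|i|j]; rewrite ?mulr_ge0 // -mulr_sumr ?Xr ?Xs.
Qed.

Lemma transport_plan_delta i0 j0 :
  transport_plan (fun i => (i == i0)%:R) (fun j => (j == j0)%:R)
    (fun i j => ((i == i0) && (j == j0))%:R).
Proof.
split=> [i j|i|j]; first exact: ler0n.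
  by rewrite (bigD1 j0) //= eqxx andbT big1 ?addr0 // => j /negbTE->; rewrite andbF.
by rewrite (bigD1 i0) //= eqxx big1 ?addr0 // => i /negbTE->.
Qed.

Definition frac_support X : {set I * J} := [set p | X p.1 p.2 \notin Num.int].

Lemma frac_support_rows_cols X :
  (forall i, \sum_j X i j \is a Num.int) -> (forall j, \sum_i X i j \is a Num.int) ->
  (#|fst @: frac_support X| + #|snd @: frac_support X| <= #|frac_support X|)%N.
Proof.
move=> Xr Xs.
have rows : (2 * #|fst @: frac_support X| <= #|frac_support X|)%N.
  apply: double_card_imset => -[i j]; rewrite inE => /= Xij.
  have [j' j'j Xij'] := frac_partner (Xr i) Xij.
  by exists (i, j'); rewrite ?inE //= xpair_eqE eqxx /= ?andbT.
have cols : (2 * #|snd @: frac_support X| <= #|frac_support X|)%N.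
  apply: double_card_imset => -[i j]; rewrite inE => /= Xij.
  have [i' i'i Xi'j] := frac_partner (Xs j) Xij.
  by exists (i', j); rewrite ?inE //= xpair_eqE eqxx /= ?andbT.
lia.
Qed.

(* Move along D until the first fractional entry in its support reaches an
   integer; entries off the support of D are unchanged. *)
Lemma circulation_shift r s C X D (q : I * J) :
  transport_plan r s X -> circulation D -> D q.1 q.2 != 0 ->
  (forall i j, D i j != 0 -> (i, j) \in frac_support X) -> cost C D <= 0 ->
  exists2 X', transport_plan r s X' &
    cost C X' <= cost C X /\ (#|frac_support X'| < #|frac_support X|)%N.
Proof.
move=> [X_ge0 Xr Xs] [Dr Ds] Dq suppD costD_le0.
pose gap (p : I * J) := frac_gap (X p.1 p.2) (D p.1 p.2).
case: (@arg_minP _ _ _ q (fun p => D p.1 p.2 != 0) gap Dq) => p Dp gap_min.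
pose X' i j := X i j + gap p * D i j.
exists X'; first split.
- move=> i j; have [Dij0|Dij] := eqVneq (D i j) 0; first by rewrite /X' Dij0 mulr0 addr0.
  by apply: frac_gap_shift_ge0; rewrite ?frac_gap_ge0 ?(gap_min (i, j)).
- by move=> i; rewrite big_split /= -mulr_sumr Dr mulr0 addr0.
- by move=> j; rewrite big_split /= -mulr_sumr Ds mulr0 addr0.
split; first by rewrite costD costZ gerDl mulr_ge0_le0 ?frac_gap_ge0.
apply/proper_card/properP; split.
  apply/fintype.subsetP => -[i j]; rewrite !inE /X' /=; apply: contraNN => Xij.
  have [Dij0|/suppD] := eqVneq (D i j) 0; first by rewrite Dij0 mulr0 addr0.
  by rewrite inE Xij.
exists p; first by have := suppD _ _ Dp; rewrite -surjective_pairing.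
by rewrite inE negbK frac_gap_int.
Qed.

Lemma integral_transport r s C X : transport_plan r s X ->
  (forall i, r i \is a Num.int) -> (forall j, s j \is a Num.int) ->
  exists2 Y, transport_plan r s Y /\ (forall i j, Y i j \is a Num.nat) &
    cost C Y <= cost C X.
Proof.
move=> Xplan r_int s_int; have [n] := ubnP #|frac_support X|.
elim: n X Xplan => // n IHn X Xplan card_lt; have [X_ge0 Xr Xs] := Xplan.
have [frac0|frac_gt0] := posnP #|frac_support X|.
  exists X => //; split => // i j; rewrite natrEint X_ge0 andbT.
  apply: contraT => Xij; suff: (0 < #|frac_support X|)%N by rewrite frac0.
  by apply/card_gt0P; exists (i, j); rewrite inE.
have Xr_int i : \sum_j X i j \is a Num.int by rewrite Xr.
have Xs_int j : \sum_i X i j \is a Num.int by rewrite Xs.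
have [D [Dcirc [i0 [j0 Dij0]] suppD]] :=
  circulation_on R frac_gt0 (frac_support_rows_cols Xr_int Xs_int).
have [E [Ecirc Eij0 suppE costE]] : exists E, [/\ circulation E, E i0 j0 != 0,
    forall i j, E i j != 0 -> (i, j) \in frac_support X & cost C E <= 0].
  case: (lerP (cost C D) 0) => [D_le0|D_gt0]; first by exists D.
  exists (fun i j => -1 * D i j); split; rewrite ?mulN1r ?oppr_eq0 //.
  - exact: circulationZ.
  - by move=> i j; rewrite mulN1r oppr_eq0; apply: suppD.
  - by rewrite costZ mulN1r oppr_le0 ltW.
have [X' X'plan [costX' cardX']] :=
  circulation_shift (q := (i0, j0)) Xplan Ecirc Eij0 suppE costE.
have [|Y Yplan costY] := IHn X' X'plan; first by lia.
by exists Y => //; apply: le_trans costX'.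
Qed.

Lemma cost_nat C X : (forall i j, C i j \is a Num.nat) ->
  (forall i j, X i j \is a Num.nat) -> cost C X \is a Num.nat.
Proof.
by move=> C_nat X_nat; apply: rpred_sum => i _; apply: rpred_sum => j _; apply: rpredM.
Qed.

Lemma integral_optimal_plan r s C X0 : transport_plan r s X0 ->
  (forall i, r i \is a Num.int) -> (forall j, s j \is a Num.int) ->
  (forall i j, C i j \is a Num.nat) ->
  exists2 Y, transport_plan r s Y /\ (forall i j, Y i j \is a Num.nat) &
    forall X, transport_plan r s X -> cost C Y <= cost C X.
Proof.
move=> X0plan r_int s_int C_nat.
pose integral_cost n := `[< exists2 Y, transport_plan r s Y /\
  (forall i j, Y i j \is a Num.nat) & cost C Y = n%:R >].
have below X : transport_plan r s X -> exists2 n, integral_cost n & n%:R <= cost C X.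
  move=> Xplan; have [Y [Yplan Y_nat] costY] := integral_transport C Xplan r_int s_int.
  have /natrP[n costYn] := cost_nat C_nat Y_nat.
  by exists n; [apply/asboolP; exists Y | rewrite -costYn].
have [n0 n0_cost _] := below X0 X0plan.
case: (ex_minnP (ex_intro integral_cost n0 n0_cost)) => m /asboolP[Y Yint costY] m_min.
exists Y => // X /below[n n_cost n_le].
by rewrite costY (le_trans _ n_le) // ler_nat m_min.
Qed.

End TransportPlans.

Local Open Scope classical_set_scope.
Local Open Scope ring_scope.

Lemma esum_codom (R : realType) (T : choiceType) (K : finType) (g : K -> T) (f : T -> R) :
  injective g -> (forall y, 0 <= f y) -> (forall y, y \notin codom g -> f y = 0) ->
  (\esum_(y in [set: T]) (f y)%:E = (\sum_k f (g k))%:E)%E.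
Proof.
move=> g_inj f_ge0 f_off.
have -> : (\esum_(y in [set: T]) (f y)%:E = \esum_(y in range g) (f y)%:E)%E.
  rewrite [RHS]esum_mkcond; apply: eq_esum => y _; case: ifPn => // y_off.
  rewrite f_off //; apply: contraNN y_off => /codomP[k ->].
  by apply/mem_set; exists k.
rewrite esum_fset; [|exact/finite_image/finite_finset|by move=> y _; rewrite lee_fin].
rewrite fsbig_image; last by move=> k1 k2 _ _ /g_inj.
have -> : [set: K] = [set` enum K] by apply/seteqP; split => k _ //=; rewrite mem_enum.
by rewrite -(fsbig_seq _ _ (enum_uniq K)) big_enum /= sumEFin.
Qed.

Lemma esum_ge_term (R : realType) (T : choiceType) (f : T -> R) y0 :
  (forall y, 0 <= f y) -> ((f y0)%:E <= \esum_(y in [set: T]) (f y)%:E)%E.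
Proof.
move=> f_ge0; apply: esum_ge; exists [set y0]; first by split => //; exact: finite_set1.
by rewrite fsbig_set1.
Qed.

Lemma bounded_nondecreasing_nat_eventually_const (v : nat -> nat) (b : nat) :
  (forall k, v k <= v k.+1)%N -> (forall k, v k <= b)%N ->
  exists k0, forall k, (k0 <= k)%N -> v k = v k0.
Proof.
move=> v_nondec v_ub.
have v_mono k d : (v k <= v (k + d))%N.
  by elim: d => [|d IHd]; rewrite ?addn0 // addnS (leq_trans IHd).
pose P m := `[< exists k, v k = m >].
have P0 : P (v 0%N) by apply/asboolP; exists 0%N.
have [|m /asboolP[k0 vk0] m_max] := @ex_maxnP P b (ex_intro P _ P0).
  by move=> m /asboolP[k <-].
exists k0 => k k0k; apply/eqP; rewrite eqn_leq -(subnKC k0k) v_mono andbT vk0.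
by apply: m_max; apply/asboolP; exists (k0 + (k - k0))%N.
Qed.

Section QuantizedMonotone.
Variables (R : realType) (g : R -> R) (D B : R).
Hypotheses (D_gt0 : 0 < D)
  (g_nonincr : forall s t, 0 < s -> s <= t -> t <= 1 -> g t <= g s)
  (g_ub : forall t, 0 < t -> t <= 1 -> g t <= B)
  (g_int : forall k : nat, D * g k.+1%:R^-1 \is a Num.int).

Lemma quantized_monotone_locally_const :
  exists2 e : R, 0 < e & exists2 L, D * L \is a Num.int &
    forall t, 0 < t -> t <= e -> g t = L.
Proof.
have inv_gt0 (k : nat) : 0 < k.+1%:R^-1 :> R by rewrite invr_gt0 ltr0n.
have inv_le1 (k : nat) : k.+1%:R^-1 <= 1 :> R by rewrite invf_le1 ?ltr0n // ler1n.
pose G k := D * g k.+1%:R^-1.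
have G_nondec k : G k <= G k.+1.
  by rewrite ler_pM2l // g_nonincr // lef_pV2 ?posrE ?ltr0n // ler_nat.
have G_mono k d : G k <= G (k + d)%N.
  by elim: d => [|d IHd]; rewrite ?addn0 // addnS (le_trans IHd).
pose v k := Num.truncn (G k - G 0%N).
have vE k : (v k)%:R = G k - G 0%N.
  apply: truncnK; rewrite natrEint subr_ge0 -{2}(add0n k) G_mono andbT.
  by apply: rpredB; apply: g_int.
have [|k|k0 v_const] :=
  @bounded_nondecreasing_nat_eventually_const v (Num.truncn (D * B - G 0%N)).
- by move=> k; apply: le_truncn; rewrite lerD2r.
- by apply: le_truncn; rewrite lerD2r ler_pM2l // g_ub.
have G_const k : (k0 <= k)%N -> G k = G k0.
  by move=> /v_const /(congr1 (fun n => n%:R : R)); rewrite !vE => /subIr.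
exists k0.+1%:R^-1 => //; exists (g k0.+1%:R^-1) => // t t_gt0 t_le.
have t_le1 : t <= 1 by apply: le_trans t_le (inv_le1 _).
apply/eqP; rewrite eq_le [X in _ && X]g_nonincr // andbT.
pose k := maxn k0 (Num.truncn t^-1).
have k_lt : k.+1%:R^-1 < t.
  rewrite -[t]invrK ltf_pV2 ?posrE ?invr_gt0 ?ltr0n //.
  by apply: lt_le_trans (truncnS_gt _) _; rewrite ler_nat ltnS leq_maxr.
apply: le_trans (g_nonincr (inv_gt0 k) (ltW k_lt) t_le1) _.
by rewrite -(ler_pM2l D_gt0) -/(G k) -/(G k0) G_const // leq_maxl.
Qed.

End QuantizedMonotone.

Lemma limf_einf_locally_const (R : realType) (f : R -> R) (e L : R) :
  0 < e -> (forall t, 0 < t -> t <= e -> f t = L) ->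
  limf_einf (fun t : R => (f t)%:E) (0%R)^'+ = L%:E.
Proof.
move=> e_gt0 f_const; rewrite limf_einfE.
have near0 : (0%R : R)^'+ [set t | 0 < t <= e].
  apply: filterS (filterI (nbhs_right_gt 0) (nbhs_right_lt e_gt0)) => t [t_gt0 t_lt].
  by rewrite /= t_gt0 ltW.
apply/eqP; rewrite eq_le; apply/andP; split.
  apply: ge_ereal_sup => _ [A A_near <-].
  have [t [At /andP[t_gt0 t_le]]] := filter_ex (filterI A_near near0).
  by apply: ge_ereal_inf; exists (f t)%:E; [exists t | rewrite f_const].
apply: (@le_trans _ _ (ereal_inf [set (f t)%:E | t in [set t | 0 < t <= e]])).
  by apply: le_ereal_inf_tmp => _ [t /andP[t_gt0 t_le] <-]; rewrite f_const.
by apply: ereal_sup_ubound; exists [set t | 0 < t <= e].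
Qed.

Lemma invn_itv01 (R : realFieldType) (N : nat) : (0 < N)%N -> 0 <= (N%:R^-1 : R) <= 1.
Proof. by move=> N_gt0; rewrite invr_ge0 ler0n /= invf_le1 ?ler1n // ltr0n. Qed.

Section LazyWalk.
Variables (V : choiceType) (nb : V -> seq V) (R : realType).

Lemma walk_cat m n y w z : walk nb m y w -> walk nb n w z -> walk nb (m + n) y z.
Proof.
elim: m y => [|m IHm] y /=; first by move=> ->.
by move=> [u [uy uw]] wz; exists u; split => //; apply: IHm.
Qed.

Lemma gdist_walk n y z : walk nb n y z ->
  exists2 m, gdist nb R y z = (m%:R)%:E & (m <= n)%N /\ walk nb m y z.
Proof.
move=> yz; rewrite /gdist; case: pselect => [ex|]; last by case; exists n; apply/asboolP.
by case: ex_minnP => m /asboolP yz_m m_min; exists m; split => //; apply/m_min/asboolP.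
Qed.

Lemma gdist_ge0 y z : (0 <= gdist nb R y z)%E.
Proof. by rewrite /gdist; case: pselect. Qed.

Definition nbr (v : V) (i : 'I_(size (nb v)).+1) : V := nth v (v :: nb v) i.

Definition nbr_index (v y : V) : 'I_(size (nb v)).+1 := inord (index y (v :: nb v)).

Arguments nbr : clear implicits.
Arguments nbr_index : clear implicits.

Lemma nbr_indexK v y : y \in v :: nb v -> nbr v (nbr_index v y) = y.
Proof.
by move=> yv; rewrite /nbr /nbr_index inordK ?nth_index // index_mem.
Qed.

Lemma mem_nbr v i : nbr v i \in v :: nb v.
Proof. exact: mem_nth. Qed.

Lemma lazy_rw_out (t : R) v y : y \notin v :: nb v -> lazy_rw nb t v y = 0.
Proof. by rewrite inE negb_or /lazy_rw => /andP[/negbTE-> /negbTE->]. Qed.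

Hypotheses (nb_uniq : forall v, uniq (nb v)) (nb_irr : forall v, v \notin nb v).

Lemma nbrK v : cancel (nbr v) (nbr_index v).
Proof.
have uniq_v : uniq (v :: nb v) by rewrite /= nb_irr nb_uniq.
by move=> i; rewrite /nbr_index /nbr index_uniq ?inord_val.
Qed.

Lemma nbr_inj v : injective (nbr v).
Proof. by move=> i j /(congr1 (nbr_index v)); rewrite !nbrK. Qed.

Lemma mem_codom_nbr v y : (y \in codom (nbr v)) = (y \in v :: nb v).
Proof.
apply/codomP/idP => [[i ->]|yv]; first exact: mem_nbr.
by exists (nbr_index v y); rewrite nbr_indexK.
Qed.

Lemma lazy_rw_nbr (t : R) v i :
  lazy_rw nb t v (nbr v i) = if i == ord0 then 1 - t else t / (size (nb v))%:R.
Proof.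
have [->|i_neq0] := eqVneq i ord0; first by rewrite /lazy_rw eqxx.
have nbr_neq : nbr v i != v by apply: contra_neq i_neq0 => nbr_v; apply: (@nbr_inj v).
by have := mem_nbr i; rewrite /lazy_rw inE (negbTE nbr_neq) /= => ->.
Qed.

Definition lazy_nbr (t : R) v i := lazy_rw nb t v (nbr v i).
Arguments lazy_nbr : clear implicits.

Lemma lazy_nbr_ge0 (t : R) v i : 0 <= t <= 1 -> 0 <= lazy_nbr t v i.
Proof.
case/andP=> t_ge0 t_le1; rewrite /lazy_nbr lazy_rw_nbr.
by case: ifP; rewrite ?subr_ge0 ?divr_ge0.
Qed.

Lemma sum_lazy_nbr (t : R) v : (0 < size (nb v))%N -> \sum_i lazy_nbr t v i = 1.
Proof.
move=> size_gt0; rewrite big_ord_recl /lazy_nbr lazy_rw_nbr eqxx.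
under eq_bigr do rewrite lazy_rw_nbr -(inj_eq val_inj) /=.
by rewrite sumr_const card_ord -[X in _ + X]mulr_natr divfK ?subrK // pnatr_eq0 -lt0n.
Qed.

Lemma lazy_nbr_mix (a t : R) v i :
  a * lazy_nbr t v i + (1 - a) * (i == ord0)%:R = lazy_nbr (a * t) v i.
Proof.
rewrite /lazy_nbr !lazy_rw_nbr; case: eqP => _; last by rewrite mulr0 addr0 mulrA.
by rewrite mulr1; ring.
Qed.

Lemma scaled_lazy_nbr_int (N k : nat) v i : (0 < N)%N -> (0 < size (nb v))%N ->
  (N * size (nb v) * k)%:R * lazy_nbr N%:R^-1 v i \is a Num.int.
Proof.
move=> N_gt0 size_gt0; rewrite /lazy_nbr lazy_rw_nbr !natrM.
have N_neq0 : N%:R != 0 :> R by rewrite pnatr_eq0 -lt0n.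
have size_neq0 : (size (nb v))%:R != 0 :> R by rewrite pnatr_eq0 -lt0n.
case: ifP => _.
  have -> : N%:R * (size (nb v))%:R * k%:R * (1 - N%:R^-1) =
            (N * size (nb v) * k)%:R - (size (nb v) * k)%:R :> R.
    by rewrite !natrM; field.
  by rewrite rpredB ?natr_int.
have -> : N%:R * (size (nb v))%:R * k%:R * (N%:R^-1 / (size (nb v))%:R) = k%:R :> R.
  by field; rewrite N_neq0 size_neq0.
exact: natr_int.
Qed.

Hypothesis nb_sym : forall v w, (w \in nb v) = (v \in nb w).

Lemma walk_nbr_center v i : exists n, walk nb n (nbr v i) v.
Proof.
have := mem_nbr i; rewrite inE => /orP[/eqP->|vi]; first by exists 0%N.
by exists 1%N, v; rewrite -nb_sym.
Qed.

Lemma walk_center_nbr v i : exists n, walk nb n v (nbr v i).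
Proof.
have := mem_nbr i; rewrite inE => /orP[/eqP vi|vi]; first by exists 0%N; rewrite /= vi.
by exists 1%N, (nbr v i).
Qed.

Section Adjacent.
Variables (x x' : V).
Hypothesis adj : x' \in nb x.

Local Notation I := 'I_(size (nb x)).+1.
Local Notation J := 'I_(size (nb x')).+1.

Lemma size_nb_gt0 : (0 < size (nb x))%N.
Proof. by move: adj; case: (nb x). Qed.

Lemma size_nb'_gt0 : (0 < size (nb x'))%N.
Proof. by move: adj; rewrite nb_sym; case: (nb x'). Qed.

Lemma gdist_adj : gdist nb R x x' = 1%:E.
Proof.
have [m -> [m_le1 walk_m]] := @gdist_walk 1 x x' (ex_intro _ x' (conj adj erefl)).
case: m m_le1 walk_m => [_ xx'|[|//] _ _]; last by [].
by move: adj; rewrite xx' (negbTE (nb_irr x')).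
Qed.

Lemma gdist_nbr_nat i j : exists m : nat, gdist nb R (nbr x i) (nbr x' j) = (m%:R)%:E.
Proof.
have [n1 w1] := walk_nbr_center i; have [n2 w2] := walk_center_nbr j.
have w : walk nb (n1 + 1 + n2) (nbr x i) (nbr x' j).
  by apply: walk_cat (walk_cat w1 _) w2; exists x'.
by have [m -> _] := gdist_walk w; exists m.
Qed.

Definition dist_nbr (i : I) (j : J) : R := fine (gdist nb R (nbr x i) (nbr x' j)).

Lemma gdist_nbr i j : gdist nb R (nbr x i) (nbr x' j) = (dist_nbr i j)%:E.
Proof. by rewrite /dist_nbr; have [m ->] := gdist_nbr_nat i j. Qed.

Lemma dist_nbr_nat i j : dist_nbr i j \is a Num.nat.
Proof. by rewrite /dist_nbr; have [m ->] := gdist_nbr_nat i j; apply: natr_nat. Qed.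

Lemma dist_nbr00 : dist_nbr ord0 ord0 = 1.
Proof. by rewrite /dist_nbr gdist_adj. Qed.

Definition restrict_nbr (xi : V -> V -> R) (i : I) (j : J) : R := xi (nbr x i) (nbr x' j).

Definition extend_nbr (X : I -> J -> R) (y y' : V) : R :=
  if (y \in x :: nb x) && (y' \in x' :: nb x') then X (nbr_index x y) (nbr_index x' y')
  else 0.

Definition nbr_supported (xi : V -> V -> R) :=
  forall y y', xi y y' != 0 -> (y \in x :: nb x) && (y' \in x' :: nb x').

Section Supported.
Variable xi : V -> V -> R.
Hypotheses (xi_ge0 : forall y y', 0 <= xi y y') (xi_supp : nbr_supported xi).

Lemma supported_esum_row y :
  (\esum_(y' in [set: V]) (xi y y')%:E = (\sum_j xi y (nbr x' j))%:E)%E.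
Proof.
apply: esum_codom => // [|y']; first exact: nbr_inj.
by rewrite mem_codom_nbr => y'_off; apply: contraNeq y'_off => /xi_supp/andP[].
Qed.

Lemma supported_esum_col y' :
  (\esum_(y in [set: V]) (xi y y')%:E = (\sum_i xi (nbr x i) y')%:E)%E.
Proof.
apply: (esum_codom (f := xi^~ y')) => // [|y]; first exact: nbr_inj.
by rewrite mem_codom_nbr => y_off; apply: contraNeq y_off => /xi_supp/andP[].
Qed.

Lemma supported_cost : coupling_cost nb xi = (cost dist_nbr (restrict_nbr xi))%:E.
Proof.
rewrite /coupling_cost.
transitivity (\esum_(p in [set: V * V]) (xi p.1 p.2 * fine (gdist nb R p.1 p.2))%:E)%E.
  apply: eq_esum => -[y y'] _ /=.
  have [->|/xi_supp/andP[yx y'x']] := eqVneq (xi y y') 0; first by rewrite mul0e mul0r.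
  by rewrite -(nbr_indexK yx) -(nbr_indexK y'x') gdist_nbr.
rewrite (esum_codom (g := fun p : I * J => (nbr x p.1, nbr x' p.2))).
- by rewrite /cost pair_bigA.
- by move=> [i1 j1] [i2 j2] [/nbr_inj-> /nbr_inj->].
- by move=> p; rewrite mulr_ge0 ?fine_ge0 ?gdist_ge0.
move=> [y y'] /= p_off.
have [->|/xi_supp/andP[yx y'x']] := eqVneq (xi y y') 0; first by rewrite mul0r.
case/negP: p_off; rewrite -(nbr_indexK yx) -(nbr_indexK y'x').
exact: (codom_f _ (nbr_index x y, nbr_index x' y')).
Qed.

End Supported.

Lemma coupling_supported t xi :
  is_coupling (lazy_rw nb t x) (lazy_rw nb t x') xi -> nbr_supported xi.
Proof.
case=> xi_ge0 [xi_row xi_col] y y' xi_neq0; apply/andP; split.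
  apply: contraNT xi_neq0 => y_off; rewrite eq_le xi_ge0 andbT -lee_fin.
  by have := esum_ge_term y' (xi_ge0 y); rewrite xi_row lazy_rw_out.
apply: contraNT xi_neq0 => y'_off; rewrite eq_le xi_ge0 andbT -lee_fin.
by have := esum_ge_term y (xi_ge0^~ y'); rewrite xi_col lazy_rw_out.
Qed.

Lemma coupling_plan t xi : is_coupling (lazy_rw nb t x) (lazy_rw nb t x') xi ->
  transport_plan (lazy_nbr t x) (lazy_nbr t x') (restrict_nbr xi) /\
  coupling_cost nb xi = (cost dist_nbr (restrict_nbr xi))%:E.
Proof.
move=> xi_coupling; have xi_supp := coupling_supported xi_coupling.
case: xi_coupling => xi_ge0 [xi_row xi_col].
split; last exact: supported_cost.
split=> [i j|i|j]; first exact: xi_ge0.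
  by apply: EFin_inj; rewrite -supported_esum_row // xi_row.
by apply: EFin_inj; rewrite -supported_esum_col // xi_col.
Qed.

Lemma extend_nbrE X i j : extend_nbr X (nbr x i) (nbr x' j) = X i j.
Proof. by rewrite /extend_nbr !mem_nbr !nbrK. Qed.

Lemma plan_coupling t X : transport_plan (lazy_nbr t x) (lazy_nbr t x') X ->
  is_coupling (lazy_rw nb t x) (lazy_rw nb t x') (extend_nbr X) /\
  coupling_cost nb (extend_nbr X) = (cost dist_nbr X)%:E.
Proof.
case=> X_ge0 Xr Xs.
have ext_ge0 y y' : 0 <= extend_nbr X y y' by rewrite /extend_nbr; case: ifP.
have ext_supp : nbr_supported (extend_nbr X).
  by move=> y y'; rewrite /extend_nbr; case: ifP => // _; rewrite eqxx.
split; last first.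
  rewrite supported_cost //; congr (EFin (cost _ _)).
  by apply/funext => i; apply/funext => j; exact: extend_nbrE.
split=> //; split=> [y|y'].
  rewrite supported_esum_row //; congr EFin.
  have [yx|y_off] := boolP (y \in x :: nb x); last first.
    by rewrite lazy_rw_out // big1 // => j _; rewrite /extend_nbr (negbTE y_off).
  by rewrite -(nbr_indexK yx); under eq_bigr do rewrite extend_nbrE; exact: Xr.
rewrite supported_esum_col //; congr EFin.
have [y'x'|y'_off] := boolP (y' \in x' :: nb x'); last first.
  by rewrite lazy_rw_out // big1 // => i _; rewrite /extend_nbr (negbTE y'_off) andbF.
by rewrite -(nbr_indexK y'x'); under eq_bigr do rewrite extend_nbrE; exact: Xs.
Qed.

Lemma W1_plans t : W1 nb (lazy_rw nb t x) (lazy_rw nb t x') =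
  ereal_inf [set (cost dist_nbr X)%:E | X in transport_plan (lazy_nbr t x) (lazy_nbr t x')].
Proof.
rewrite /W1; congr ereal_inf; apply/seteqP; split => _ /= [xi xi_cpl <-].
  by have [Xplan ->] := coupling_plan xi_cpl; exists (restrict_nbr xi).
by have [cpl <-] := plan_coupling xi_cpl; exists (extend_nbr xi).
Qed.

Definition W1r (t : R) : R := fine (W1 nb (lazy_rw nb t x) (lazy_rw nb t x')).

Lemma product_plan t : 0 <= t <= 1 -> transport_plan (lazy_nbr t x) (lazy_nbr t x')
  (fun i j => lazy_nbr t x i * lazy_nbr t x' j).
Proof.
move=> t01; split=> [i j|i|j]; first by rewrite mulr_ge0 ?lazy_nbr_ge0.
  by rewrite -mulr_sumr sum_lazy_nbr ?mulr1 // size_nb'_gt0.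
by rewrite -mulr_suml sum_lazy_nbr ?mul1r // size_nb_gt0.
Qed.

Lemma dist_nbr_ge0 i j : 0 <= dist_nbr i j.
Proof. by rewrite natr_ge0 ?dist_nbr_nat. Qed.

Lemma W1_finite t : 0 <= t <= 1 -> W1 nb (lazy_rw nb t x) (lazy_rw nb t x') = (W1r t)%:E.
Proof.
move=> t01; rewrite /W1r fineK // W1_plans ge0_fin_numE.
  apply: le_lt_trans (ltry (cost dist_nbr (fun i j => lazy_nbr t x i * lazy_nbr t x' j))).
  by apply: ereal_inf_lbound; exists (fun i j => lazy_nbr t x i * lazy_nbr t x' j);
    first exact: product_plan.
apply: le_ereal_inf_tmp => _ [X [X_ge0 _ _] <-].
by rewrite lee_fin cost_ge0 // => i j; exact: dist_nbr_ge0.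
Qed.

Lemma W1r_le_cost t X : 0 <= t <= 1 ->
  transport_plan (lazy_nbr t x) (lazy_nbr t x') X -> W1r t <= cost dist_nbr X.
Proof.
by move=> t01 Xplan; rewrite -lee_fin -W1_finite // W1_plans; apply: ereal_inf_lbound; exists X.
Qed.

Lemma W1r_ge t (b : R) : 0 <= t <= 1 ->
  (forall X, transport_plan (lazy_nbr t x) (lazy_nbr t x') X -> b <= cost dist_nbr X) ->
  b <= W1r t.
Proof.
move=> t01 lb; rewrite -lee_fin -W1_finite // W1_plans.
by apply: le_ereal_inf_tmp => _ [X Xplan <-]; rewrite lee_fin lb.
Qed.

Lemma W1_optimal_plan t X : 0 <= t <= 1 ->
  transport_plan (lazy_nbr t x) (lazy_nbr t x') X ->
  (forall X', transport_plan (lazy_nbr t x) (lazy_nbr t x') X' ->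
    cost dist_nbr X <= cost dist_nbr X') ->
  W1 nb (lazy_rw nb t x) (lazy_rw nb t x') = (cost dist_nbr X)%:E.
Proof.
move=> t01 Xplan Xopt; rewrite W1_finite //; congr EFin.
by apply/eqP; rewrite eq_le W1r_le_cost //= W1r_ge.
Qed.

(* Any plan keeps at least 1 - 2t of the mass on the pair (x, x'), at distance 1. *)
Lemma W1r_ge_1_sub_2t t : 0 <= t <= 1 -> 1 - 2 * t <= W1r t.
Proof.
move=> t01; apply: W1r_ge => // X [X_ge0 Xr Xs].
have stay : X ord0 ord0 <= cost dist_nbr X.
  rewrite /cost (bigD1 ord0) //= (bigD1 ord0) //= dist_nbr00 mulr1 -addrA lerDl.
  by rewrite addr_ge0 ?sumr_ge0 // => [j|i] _; rewrite ?sumr_ge0 // => *;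
    rewrite mulr_ge0 ?dist_nbr_ge0.
have move_out : \sum_(j | j != ord0) X ord0 j <= t.
  apply: le_trans (_ : \sum_(j | j != ord0) lazy_nbr t x' j <= t).
    apply: ler_sum => j _; rewrite -Xs (bigD1 ord0) //= lerDl.
    exact: sumr_ge0.
  have := sum_lazy_nbr t size_nb'_gt0; rewrite (bigD1 ord0) //=.
  rewrite /lazy_nbr lazy_rw_nbr eqxx => sum1; lra.
have := Xr ord0; rewrite (bigD1 ord0) //= /lazy_nbr lazy_rw_nbr eqxx; lra.
Qed.

Lemma mixed_plan a t X : 0 <= a <= 1 ->
  transport_plan (lazy_nbr t x) (lazy_nbr t x') X ->
  transport_plan (lazy_nbr (a * t) x) (lazy_nbr (a * t) x')
    (fun i j => a * X i j + (1 - a) * ((i == ord0) && (j == ord0))%:R).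
Proof.
move=> /andP[a_ge0 a_le1] Xplan.
have := transport_planD (transport_planZ a_ge0 Xplan)
  (transport_planZ (a := 1 - a) _ (transport_plan_delta _ ord0 ord0)).
rewrite subr_ge0 a_le1 => /(_ isT).
have mix v : (fun i => a * lazy_nbr t v i + (1 - a) * (i == ord0)%:R) = lazy_nbr (a * t) v.
  by apply/funext => i; exact: lazy_nbr_mix.
by rewrite !mix.
Qed.

(* Mixing a plan at time t, with weight s / t, with the coupling that keeps all
   the mass at (x, x') gives a plan at time s. *)
Lemma W1r_mix s t : 0 < s -> s <= t -> t <= 1 -> W1r s <= s / t * W1r t + (1 - s / t).
Proof.
move=> s_gt0 st t_le1; have t_gt0 := lt_le_trans s_gt0 st.
have a_gt0 : 0 < s / t by rewrite divr_gt0.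
have a01 : 0 <= s / t <= 1 by rewrite ltW //= ler_pdivrMr // mul1r.
have t01 : 0 <= t <= 1 by rewrite ltW.
have s01 : 0 <= s <= 1 by rewrite ltW //= (le_trans st).
suff : (W1r s - (1 - s / t)) / (s / t) <= W1r t by rewrite ler_pdivrMr // => h; lra.
apply: W1r_ge => // X Xplan; rewrite ler_pdivrMr //.
have := mixed_plan a01 Xplan; rewrite divfK ?gt_eqF // => /(W1r_le_cost s01).
by rewrite costD !costZ cost_delta dist_nbr00 => h; lra.
Qed.

Lemma kappaE t : kappa nb t x x' = 1 - W1r t.
Proof. by rewrite /kappa gdist_adj divr1. Qed.

Lemma optimal_plan_scaled N : (0 < N)%N ->
  let t : R := N%:R^-1 in let M := (N * size (nb x) * size (nb x'))%N in
  exists Y, [/\ forall i j, Y i j \is a Num.nat,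
    transport_plan (lazy_nbr t x) (lazy_nbr t x') (fun i j => M%:R^-1 * Y i j) &
    forall X, transport_plan (lazy_nbr t x) (lazy_nbr t x') X ->
      cost dist_nbr (fun i j => M%:R^-1 * Y i j) <= cost dist_nbr X].
Proof.
move=> N_gt0 t M.
have M_gt0 : 0 < M%:R :> R by rewrite ltr0n !muln_gt0 N_gt0 size_nb_gt0 size_nb'_gt0.
have r_int i : M%:R * lazy_nbr t x i \is a Num.int.
  exact: scaled_lazy_nbr_int N_gt0 size_nb_gt0.
have s_int j : M%:R * lazy_nbr t x' j \is a Num.int.
  by rewrite /M mulnAC; exact: scaled_lazy_nbr_int N_gt0 size_nb'_gt0.
have [Y [[Y_ge0 Yr Ys] Y_nat] Yopt] := integral_optimal_plan
  (transport_planZ (ltW M_gt0) (product_plan (invn_itv01 R N_gt0))) r_int s_int dist_nbr_nat.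
have M_neq0 : M%:R != 0 :> R by rewrite gt_eqF.
exists Y; split => //.
  split=> [i j|i|j]; last by rewrite -mulr_sumr Ys mulKf.
    by rewrite mulr_ge0 // invr_ge0 ltW.
  by rewrite -mulr_sumr Yr mulKf.
move=> X /(transport_planZ (ltW M_gt0))/Yopt; rewrite !costZ => costY.
by rewrite ler_pdivrMl.
Qed.

Lemma integral_optimal_coupling N : (0 < N)%N ->
  let t : R := N%:R^-1 in let M := (N * size (nb x) * size (nb x'))%N in
  exists2 xi, is_coupling (lazy_rw nb t x) (lazy_rw nb t x') xi /\
      coupling_cost nb xi = W1 nb (lazy_rw nb t x) (lazy_rw nb t x') &
    forall y y', exists k : nat, xi y y' = k%:R / M%:R.
Proof.
move=> N_gt0 t M; have [Y [Y_nat Yplan Yopt]] := optimal_plan_scaled N_gt0.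
have [xi_cpl xi_cost] := plan_coupling Yplan.
exists (extend_nbr (fun i j => M%:R^-1 * Y i j)).
  by rewrite xi_cost (W1_optimal_plan (invn_itv01 R N_gt0) Yplan Yopt).
move=> y y'; rewrite /extend_nbr; case: ifP => _; last by exists 0%N; rewrite mul0r.
by have /natrP[k ->] := Y_nat (nbr_index x y) (nbr_index x' y'); exists k; rewrite mulrC.
Qed.

Lemma W1r_quantized N : (0 < N)%N ->
  exists n : nat, W1r N%:R^-1 = n%:R / (N * size (nb x) * size (nb x'))%:R.
Proof.
move=> N_gt0; have [Y [Y_nat Yplan Yopt]] := optimal_plan_scaled N_gt0.
have := W1_optimal_plan (invn_itv01 R N_gt0) Yplan Yopt.
rewrite W1_finite ?invn_itv01 // => -[->]; rewrite costZ mulrC.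
by have /natrP[n ->] := cost_nat dist_nbr_nat Y_nat; exists n.
Qed.

Lemma size_nb_prod_gt0 : (0 < size (nb x) * size (nb x'))%N.
Proof. by rewrite muln_gt0 size_nb_gt0 size_nb'_gt0. Qed.

Lemma kappa_div_nonincr (s t : R) : 0 < s -> s <= t -> t <= 1 ->
  kappa nb t x x' / t <= kappa nb s x x' / s.
Proof.
move=> s_gt0 st t_le1; have t_gt0 := lt_le_trans s_gt0 st.
have := W1r_mix s_gt0 st t_le1; rewrite !kappaE => W_s.
rewrite -(ler_pM2l s_gt0) [X in _ <= X]mulrCA divff ?gt_eqF // mulr1 mulrCA.
nra.
Qed.

Lemma kappa_div_le2 (t : R) : 0 < t -> t <= 1 -> kappa nb t x x' / t <= 2.
Proof.
move=> t_gt0 t_le1; have := W1r_ge_1_sub_2t (t := t); rewrite ltW //= t_le1 => /(_ isT).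
by rewrite kappaE ler_pdivrMr // => W_t; lra.
Qed.

Lemma kappa_div_quantized N : (0 < N)%N ->
  (size (nb x) * size (nb x'))%:R * (kappa nb (N%:R^-1 : R) x x' / N%:R^-1) \is a Num.int.
Proof.
move=> N_gt0; have [n Wn] := W1r_quantized N_gt0.
rewrite kappaE Wn invrK; set D := (size (nb x) * size (nb x'))%:R.
rewrite -mulnA natrM -/D.
have N_neq0 : N%:R != 0 :> R by rewrite pnatr_eq0 -lt0n.
have -> : D * ((1 - n%:R / (N%:R * D)) * N%:R) = N%:R * D - n%:R.
  by field; rewrite N_neq0 !pnatr_eq0 -!lt0n size_nb_gt0 size_nb'_gt0.
by rewrite rpredB ?rpredM ?natr_int.
Qed.

Lemma kappa1_quantized :
  exists k : int, kappa nb (1 : R) x x' = k%:~R / (size (nb x) * size (nb x'))%:R.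
Proof.
have := kappa_div_quantized (ltn0Sn 0); rewrite mulr1n invr1 divr1 => /intrP[k Ek].
by exists k; rewrite -Ek mulrC mulKf // pnatr_eq0 -lt0n size_nb_prod_gt0.
Qed.

Lemma ric_quantized :
  exists k : int, ric nb R x x' = (k%:~R / (size (nb x) * size (nb x'))%:R)%:E.
Proof.
have D_gt0 : 0 < (size (nb x) * size (nb x'))%:R :> R by rewrite ltr0n size_nb_prod_gt0.
have [e e_gt0 [L /intrP[k Ek] g_const]] := quantized_monotone_locally_const
  (g := fun t => kappa nb t x x' / t) D_gt0 kappa_div_nonincr kappa_div_le2
  (fun k => kappa_div_quantized (ltn0Sn k)).
by exists k; rewrite /ric (limf_einf_locally_const e_gt0 g_const) -Ek mulrC mulKf ?gt_eqF.
Qed.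

End Adjacent.

End LazyWalk.

Theorem theorem1 (R : realType) (V : choiceType) (nb : V -> seq V)
  (nb_uniq : forall v, uniq (nb v))
  (nb_irr : forall v, v \notin nb v)
  (nb_sym : forall v w, (w \in nb v) = (v \in nb w))
  (x x' : V) (adj : x' \in nb x) (N : nat) (N_gt0 : (0 < N)%N) :
  let delta := size (nb x) in
  let delta' := size (nb x') in
  let t : R := (N%:R)^-1 in
  (exists xi : V -> V -> R,
      is_coupling (lazy_rw nb t x) (lazy_rw nb t x') xi /\
      coupling_cost nb xi = W1 nb (lazy_rw nb t x) (lazy_rw nb t x') /\
      (forall y y', exists k : nat, xi y y' = k%:R / (N * delta * delta')%:R)) /\
  (exists k : int, kappa nb (1 : R) x x' = k%:~R / (delta * delta')%:R) /\
  (exists k : int, ric nb R x x' = (k%:~R / (delta * delta')%:R)%:E).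
Proof.
move=> delta delta' t; split.
  have [xi [xi_coupling xi_cost] xi_quantized] :=
    integral_optimal_coupling R nb_uniq nb_irr nb_sym adj N_gt0.
  by exists xi.
split; [exact: kappa1_quantized | exact: ric_quantized].
Qed.
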